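(* Let $c\ge 0$, $n\in\mathbb{R}$ with $n>c$, and $\rho\in\mathbb{N}$. Define for $t\in[0,\infty)$ $$\omega_{n,j,\rho}(t)=\begin{cases}\displaystyle\int_t^\infty \mu_{n,1,\rho}(u)\,du, & j=0,\\[2mm] \displaystyle\int_0^t\big(\mu_{n,j,\rho}(u)-\mu_{n,j+1,\rho}(u)\big)\,du, & j\in\mathbb{N}.\end{cases}$$ Then for every $j\in\mathbb{N}_0$ and every $t\in[0,\infty)$, $$\omega_{n,j,\rho}(t)=\sum_{i=0}^{\rho-1}p_{n\rho+c,\,i+j\rho}(t).$$
   Context: Notation: for $c\in\mathbb{R}$, $a\in\mathbb{R}$ and $j\in\mathbb{N}$, $a^{c,\overline{j}}=\prod_{l=0}^{j-1}(a+cl)$ and $a^{c,\underline{j}}=\prod_{l=0}^{j-1}(a-cl)$, with $a^{c,\overline{0}}=a^{c,\underline{0}}=1$. Fix $c\ge0$. For real $m$ (with $m>0$) and $j\in\mathbb{N}_0$, $x\in[0,\infty)$, the basis functions are $p_{m,j}(x)=\frac{m^j}{j!}x^je^{-mx}$ if $c=0$, and $p_{m,j}(x)=\frac{m^{c,\overline{j}}}{j!}x^j(1+cx)^{-(\frac{m}{c}+j)}$ if $c>0$. For $n>c$, $\rho>0$, $j\in\mathbb{N}$, $t>0$: $\mu_{n,j,\rho}(t)=\frac{(n\rho)^{j\rho}}{\Gamma(j\rho)}t^{j\rho-1}e^{-n\rho t}$ if $c=0$, and $\mu_{n,j,\rho}(t)=\frac{c^{j\rho}}{B(j\rho,\frac{n}{c}\rho+1)}t^{j\rho-1}(1+ct)^{-(\frac{n}{c}+j)\rho-1}$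 if $c>0$, where $B(x,y)=\Gamma(x)\Gamma(y)/\Gamma(x+y)$ is Euler's Beta function. *)

From Stdlib Require Import Reals Lra ClassicalEpsilon Factorial.
Open Scope R_scope.

(* real power with convention for a zero/negative base: 0^0 = 1, 0^y = 0 otherwise *)
Definition rpow (x y : R) : R :=
  if Rlt_dec 0 x then Rpower x y
  else if Req_EM_T y 0 then 1 else 0.

Fixpoint rising (c a : R) (j : nat) : R :=
  match j with
  | O => 1
  | S k => rising c a k * (a + c * INR k)
  end.

(* Riemann integral value (0 if not Riemann integrable) *)
Definition RInt (f : R -> R) (a b : R) : R :=
  epsilon (inhabits 0) (fun v => exists pr : Riemann_integrable f a b, RiemannInt pr = v).

Definition improper_int_infty (f : R -> R) (a l : R) : Prop :=
  (forall b, a <= b -> inhabited (Riemann_integrable f a b)) /\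
  (forall eps, 0 < eps -> exists M, forall b, M <= b -> a <= b ->
      Rabs (RInt f a b - l) < eps).

(* Euler's Beta function B(x,y) = int_0^1 t^{x-1} (1-t)^{y-1} dt  (used for x,y >= 1) *)
Definition Beta (x y : R) : R :=
  RInt (fun t => rpow t (x - 1) * rpow (1 - t) (y - 1)) 0 1.

Definition p_basis (c m : R) (j : nat) (x : R) : R :=
  if Req_EM_T c 0 then m ^ j / INR (fact j) * x ^ j * exp (- m * x)
  else rising c m j / INR (fact j) * x ^ j * Rpower (1 + c * x) (- (m / c + INR j)).

(* mu_{n,j,rho}(t), with rho a positive natural number, so Gamma(j rho) = (j rho - 1)! *)
Definition mu (c n : R) (j rho : nat) (t : R) : R :=
  let r := INR rho in
  if Req_EM_T c 0 then
    (n * r) ^ (j * rho) / INR (fact (j * rho - 1)) * t ^ (j * rho - 1) * exp (- n * r * t)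
  else
    c ^ (j * rho) / Beta (INR (j * rho)) (n / c * r + 1) * t ^ (j * rho - 1)
      * Rpower (1 + c * t) (- ((n / c + INR j) * r) - 1).

(* omega_{n,j,rho}(t) = v  (including existence of the integrals) *)
Definition omega_is (c n : R) (j rho : nat) (t v : R) : Prop :=
  match j with
  | O => improper_int_infty (mu c n 1 rho) t v
  | S _ => inhabited (Riemann_integrable (fun u => mu c n j rho u - mu c n (S j) rho u) 0 t) /\
           RInt (fun u => mu c n j rho u - mu c n (S j) rho u) 0 t = v
  end.

(* With [m = n rho + c] and [q_{m,k} = m p_{m+c,k-1}] one has [p_{m,k}' = q_{m,k} - q_{m,k+1}],
   and [mu_{n,j,rho} = q_{m,j rho}] because [B(K, y) = (K-1)! / y^{1,\overline{K}}] for integral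
   [K], by repeated integration by parts.  So the block [sum_{i<rho} p_{m,i+j rho}] is an
   antiderivative of [mu_{n,j,rho} - mu_{n,j+1,rho}] (of [- mu_{n,1,rho}] when [j = 0]); it
   vanishes at [0] when [j >= 1] and tends to [0] at infinity, since each [p_{m,k}] does. *)

From Pilot Require Import Defs.
From Stdlib Require Import Reals Lra Lia ClassicalEpsilon Factorial.
From Coquelicot Require Import Coquelicot.
Open Scope R_scope.

Lemma Riemann_RInt_of_is_RInt (f : R -> R) (a b v : R) :
  is_RInt f a b v -> inhabited (Riemann_integrable f a b) /\ Defs.RInt f a b = v.
Proof.
  intros Hf.
  assert (pr : Riemann_integrable f a b) by (apply ex_RInt_Reals_0; exists v; exact Hf).
  split; [exact (inhabits pr) |].
  unfold Defs.RInt.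
  destruct (epsilon_spec (inhabits 0)
              (fun w => exists pr : Riemann_integrable f a b, RiemannInt pr = w))
    as [pr' <-]; [now exists (RiemannInt pr), pr |].
  rewrite <- RInt_Reals. now apply is_RInt_unique.
Qed.

Lemma is_RInt_derive_le (F f : R -> R) (a b v : R) : a <= b ->
  (forall x, a <= x <= b -> is_derive F x (f x)) ->
  (forall x, a <= x <= b -> continuous f x) ->
  F b - F a = v -> is_RInt f a b v.
Proof.
  intros Hab HF Hf <-.
  apply (is_RInt_derive (V := R_CompleteNormedModule));
    rewrite Rmin_left, Rmax_right by exact Hab; assumption.
Qed.

Lemma improper_int_infty_of_is_RInt (f G : R -> R) (a l : R) :
  (forall b, a <= b -> is_RInt f a b (l - G b)) -> is_lim G p_infty 0 ->
  improper_int_infty f a l.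
Proof.
  intros Hf HG. split.
  - intros b Hb. exact (proj1 (Riemann_RInt_of_is_RInt _ _ _ _ (Hf b Hb))).
  - intros eps Heps.
    destruct (proj2 (is_lim_spec G p_infty 0) HG (mkposreal eps Heps)) as [M HM].
    exists (M + 1). intros b HMb Hab.
    rewrite (proj2 (Riemann_RInt_of_is_RInt _ _ _ _ (Hf b Hab))).
    replace (l - G b - l) with (- (G b - 0)) by ring.
    rewrite Rabs_Ropp. apply HM. lra.
Qed.

Lemma rising_S_l (c a : R) (k : nat) : rising c a (S k) = a * rising c (a + c) k.
Proof.
  revert a; induction k as [|k IH]; intros a; [simpl; ring |].
  change (rising c a (S (S k))) with (rising c a (S k) * (a + c * INR (S k))).
  rewrite IH, S_INR. simpl. ring.
Qed.

Lemma rising_pos (c a : R) (k : nat) : 0 <= c -> 0 < a -> 0 < rising c a k.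
Proof.
  intros Hc Ha; induction k as [|k IH]; simpl; [lra |].
  pose proof (pos_INR k). apply Rmult_lt_0_compat; nra.
Qed.

Lemma rising_scale (c a : R) (k : nat) : c <> 0 -> rising c a k = c ^ k * rising 1 (a / c) k.
Proof. intros Hc; induction k as [|k IH]; simpl; [ring | rewrite IH; field; exact Hc]. Qed.

Lemma rpow_pos (x y : R) : 0 < x -> rpow x y = Rpower x y.
Proof. intros Hx. unfold rpow. destruct (Rlt_dec 0 x); [reflexivity | lra]. Qed.

Lemma rpow_nonpos (x y : R) : x <= 0 -> y <> 0 -> rpow x y = 0.
Proof.
  intros Hx Hy. unfold rpow.
  destruct (Rlt_dec 0 x); [lra |]. destruct (Req_EM_T y 0); [lra | reflexivity].
Qed.

Lemma rpow_one_minus_succ (a s : R) : 0 < a ->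
  rpow (1 - s) (a + 1) = (1 - s) * rpow (1 - s) a.
Proof.
  intros Ha. destruct (Rlt_or_le 0 (1 - s)) as [Hs | Hs].
  - rewrite !rpow_pos, Rpower_plus, Rpower_1 by lra. ring.
  - rewrite !rpow_nonpos by lra. ring.
Qed.

Lemma rpow_one_minus_near_1 (a eps : R) : 0 < a -> 0 < eps ->
  exists delta, 0 < delta /\ forall t, Rabs (t - 1) < delta -> Rabs (rpow (1 - t) a) < eps.
Proof.
  intros Ha Heps. exists (exp (ln eps / a)). split; [apply exp_pos |].
  intros t Ht. destruct (Rlt_or_le t 1) as [Ht1 | Ht1].
  - rewrite rpow_pos by lra.
    rewrite Rabs_pos_eq by (left; apply exp_pos).
    rewrite Rabs_left in Ht by lra.
    replace eps with (Rpower (exp (ln eps / a)) a).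
    + apply Rlt_Rpower_l; lra.
    + unfold Rpower. rewrite ln_exp. replace (a * (ln eps / a)) with (ln eps) by (field; lra).
      now apply exp_ln.
  - rewrite rpow_nonpos, Rabs_R0 by lra. exact Heps.
Qed.

Lemma continuous_rpow_one_minus (a t : R) : 0 < a -> t <= 1 ->
  continuous (fun s => rpow (1 - s) a) t.
Proof.
  intros Ha [Ht | ->].
  - apply continuous_ext_loc with (fun s => exp (a * ln (1 - s))).
    + exists (mkposreal (1 - t) ltac:(lra)). intros s Hs.
      apply Rabs_lt_between' in Hs. simpl in Hs. rewrite rpow_pos by lra. reflexivity.
    + apply (ex_derive_continuous (V := R_NormedModule)). auto_derive. lra.
  - apply continuity_pt_filterlim. intros eps Heps.
    destruct (rpow_one_minus_near_1 a eps Ha Heps) as [delta [Hdelta Hnear]].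
    exists delta. split; [exact Hdelta |]. intros s [_ Hs]. simpl in *. unfold R_dist in *.
    rewrite Rminus_eq_0, (rpow_nonpos 0) by lra. rewrite Rminus_0_r. now apply Hnear.
Qed.

Lemma is_derive_rpow_one_minus (a t : R) : 0 < a -> t <= 1 ->
  is_derive (fun s => rpow (1 - s) (a + 1)) t (- (a + 1) * rpow (1 - t) a).
Proof.
  intros Ha [Ht | ->].
  - apply is_derive_ext_loc with (fun s => exp ((a + 1) * ln (1 - s))).
    { exists (mkposreal (1 - t) ltac:(lra)). intros s Hs.
      apply Rabs_lt_between' in Hs. simpl in Hs. rewrite rpow_pos by lra. reflexivity. }
    auto_derive; [lra |].
    rewrite rpow_pos by lra. unfold Rpower.
    replace (1 + - t) with (1 - t) by ring.
    replace ((a + 1) * ln (1 - t)) with (a * ln (1 - t) + ln (1 - t)) by ring.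
    rewrite exp_plus, exp_ln by lra. field. lra.
  - apply is_derive_Reals. intros eps Heps.
    destruct (rpow_one_minus_near_1 a eps Ha Heps) as [delta [Hdelta Hnear]].
    exists (mkposreal delta Hdelta). intros h Hh0 Hh. simpl in Hh.
    rewrite !rpow_one_minus_succ by exact Ha.
    rewrite Rminus_eq_0, (rpow_nonpos 0 a) by lra.
    replace (((1 - (1 + h)) * rpow (1 - (1 + h)) a - 0 * 0) / h - - (a + 1) * 0)
      with (- rpow (1 - (1 + h)) a) by (field; exact Hh0).
    rewrite Rabs_Ropp. apply Hnear. now replace (1 + h - 1) with h by ring.
Qed.

Lemma rpow_one_minus_0 (a : R) : rpow (1 - 0) a = 1.
Proof.
  rewrite rpow_pos by lra. unfold Rpower. rewrite Rminus_0_r, ln_1, Rmult_0_r. apply exp_0.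
Qed.

Lemma is_RInt_beta_by_parts (k : nat) (a : R) : 0 < a ->
  is_RInt (fun t => INR (S k) * (t ^ k * rpow (1 - t) (a + 1))
                    - (a + 1) * (t ^ S k * rpow (1 - t) a)) 0 1 0.
Proof.
  intros Ha. apply (is_RInt_derive_le (fun t => t ^ S k * rpow (1 - t) (a + 1))); [lra | | |].
  - intros x Hx.
    replace (INR (S k) * (x ^ k * rpow (1 - x) (a + 1)) - (a + 1) * (x ^ S k * rpow (1 - x) a))
      with (plus (mult (INR (S k) * 1 * x ^ Nat.pred (S k)) (rpow (1 - x) (a + 1)))
                 (mult (x ^ S k) (- (a + 1) * rpow (1 - x) a)))
      by (unfold plus, mult; simpl; ring).
    apply (is_derive_mult (K := R_AbsRing) (fun t => t ^ S k) (fun t => rpow (1 - t) (a + 1))).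
    + apply is_derive_pow, (is_derive_id (K := R_AbsRing)).
    + apply is_derive_rpow_one_minus; lra.
    + intros; apply Rmult_comm.
  - intros x Hx.
    apply (continuous_minus (V := R_NormedModule));
      apply (continuous_mult (K := R_AbsRing)); try apply continuous_const;
      apply (continuous_mult (K := R_AbsRing)); try apply continuous_rpow_one_minus; try lra;
      apply (ex_derive_continuous (V := R_NormedModule)); auto_derive; constructor.
  - rewrite (rpow_nonpos (1 - 1)) by lra. simpl. ring.
Qed.

Lemma is_RInt_pow_mul_rpow_one_minus (k : nat) : forall a, 0 < a ->
  is_RInt (fun t => t ^ k * rpow (1 - t) a) 0 1 (INR (fact k) / rising 1 (a + 1) (S k)).
Proof.
  induction k as [|k IH]; intros a Ha.
  - apply (is_RInt_derive_le (fun t => - / (a + 1) * rpow (1 - t) (a + 1))); [lra | | |].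
    + intros x Hx.
      replace (x ^ 0 * rpow (1 - x) a) with (- / (a + 1) * (- (a + 1) * rpow (1 - x) a))
        by (simpl; field; lra).
      apply is_derive_scal, is_derive_rpow_one_minus; lra.
    + intros x Hx. apply (continuous_mult (K := R_AbsRing)); [apply continuous_const |].
      apply continuous_rpow_one_minus; lra.
    + rewrite (rpow_nonpos (1 - 1)), rpow_one_minus_0 by lra. simpl. field. lra.
  - apply (is_RInt_ext (fun t => / (a + 1) *
             (INR (S k) * (t ^ k * rpow (1 - t) (a + 1))
              - (INR (S k) * (t ^ k * rpow (1 - t) (a + 1))
                 - (a + 1) * (t ^ S k * rpow (1 - t) a))))).
    { intros t _. simpl. field. lra. }
    replace (INR (fact (S k)) / rising 1 (a + 1) (S (S k)))
      with (/ (a + 1) * (INR (S k) * (INR (fact k) / rising 1 (a + 1 + 1) (S k)) - 0)).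
    + apply (is_RInt_scal (V := R_NormedModule)), (is_RInt_minus (V := R_NormedModule)).
      * apply (is_RInt_scal (V := R_NormedModule)), IH. lra.
      * now apply is_RInt_beta_by_parts.
    + rewrite (rising_S_l 1 (a + 1) (S k)), fact_simpl, mult_INR.
      pose proof (rising_pos 1 (a + 1 + 1) (S k) ltac:(lra) ltac:(lra)).
      field. split; lra.
Qed.

Lemma Beta_nat (k : nat) (y : R) : 1 < y ->
  Beta (INR (S k)) y = INR (fact k) / rising 1 y (S k).
Proof.
  intros Hy. unfold Beta. apply Riemann_RInt_of_is_RInt.
  pose proof (is_RInt_pow_mul_rpow_one_minus k (y - 1) ltac:(lra)) as Hbeta.
  replace (y - 1 + 1) with y in Hbeta by ring.
  eapply is_RInt_ext; [| exact Hbeta].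
  rewrite Rmin_left, Rmax_right by lra. intros t Ht.
  rewrite S_INR, Rplus_minus_r, (rpow_pos t), Rpower_pow by lra. reflexivity.
Qed.

Lemma p_basis_exp (m : R) (k : nat) (x : R) :
  p_basis 0 m k x = m ^ k / INR (fact k) * x ^ k * exp (- m * x).
Proof. unfold p_basis. destruct (Req_EM_T 0 0); [reflexivity | lra]. Qed.

Lemma p_basis_Rpower (c m : R) (k : nat) (x : R) : c <> 0 ->
  p_basis c m k x = rising c m k / INR (fact k) * x ^ k * Rpower (1 + c * x) (- (m / c + INR k)).
Proof. intros Hc. unfold p_basis. destruct (Req_EM_T c 0); [contradiction | reflexivity]. Qed.

Definition q_basis (c m : R) (k : nat) (t : R) : R :=
  match k with
  | O => 0
  | S k => m * p_basis c (m + c) k t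
  end.

Lemma is_derive_p_basis (c m : R) (k : nat) (x : R) : 0 < 1 + c * x ->
  is_derive (p_basis c m k) x (q_basis c m k x - q_basis c m (S k) x).
Proof.
  intros Hx. destruct (Req_EM_T c 0) as [-> | Hc].
  - apply is_derive_ext with (fun t => m ^ k / INR (fact k) * t ^ k * exp (- m * t)).
    { intros t. now rewrite p_basis_exp. }
    auto_derive; [constructor |].
    destruct k as [|k]; unfold q_basis; rewrite !p_basis_exp, Rplus_0_r; simpl pred.
    + simpl. field.
    + rewrite fact_simpl, mult_INR.
      pose proof (INR_fact_neq_0 k). pose proof (not_0_INR (S k) (Nat.neq_succ_0 k)).
      simpl pow. field. auto.
  - apply is_derive_ext with (fun t => rising c m k / INR (fact k) * t ^ k
                                        * exp (- (m / c + INR k) * ln (1 + c * t))).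
    { intros t. now rewrite p_basis_Rpower. }
    auto_derive; [exact Hx |].
    fold (Rpower (1 + c * x) (- (m / c + INR k))).
    assert (Hshift : forall e,
               Rpower (1 + c * x) (- (e + 1)) = Rpower (1 + c * x) (- e) / (1 + c * x)).
    { intros e. rewrite Ropp_plus_distr, Rpower_plus, (Rpower_Ropp _ 1), Rpower_1 by exact Hx.
      reflexivity. }
    destruct k as [|k]; unfold q_basis; rewrite !p_basis_Rpower by exact Hc.
    + replace ((m + c) / c + INR 0) with (m / c + INR 0 + 1) by (simpl; field; exact Hc).
      rewrite Hshift. simpl. field. lra.
    + replace ((m + c) / c + INR k) with (m / c + INR (S k)) by (rewrite S_INR; field; exact Hc).
      replace ((m + c) / c + INR (S k)) with (m / c + INR (S k) + 1) by (field; exact Hc).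
      rewrite Hshift, (rising_S_l c m k), fact_simpl, mult_INR.
      change (rising c (m + c) (S k)) with (rising c (m + c) k * (m + c + c * INR k)).
      pose proof (INR_fact_neq_0 k). pose proof (not_0_INR (S k) (Nat.neq_succ_0 k)).
      rewrite S_INR in *. simpl pow. simpl pred. field. repeat split; lra.
Qed.

Lemma continuous_p_basis (c m : R) (k : nat) (x : R) : 0 < 1 + c * x ->
  continuous (p_basis c m k) x.
Proof.
  intros Hx. apply (ex_derive_continuous (V := R_NormedModule)).
  eexists. now apply is_derive_p_basis.
Qed.

Lemma continuous_q_basis (c m : R) (k : nat) (x : R) : 0 < 1 + c * x ->
  continuous (q_basis c m k) x.
Proof.
  intros Hx. destruct k as [|k]; simpl.
  - apply continuous_const.
  - apply (continuous_mult (K := R_AbsRing)); [apply continuous_const |].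
    now apply continuous_p_basis.
Qed.

Lemma p_basis_at_0 (c m : R) (k : nat) : (1 <= k)%nat -> p_basis c m k 0 = 0.
Proof. intros Hk. unfold p_basis. rewrite pow_i by lia. destruct (Req_EM_T c 0); ring. Qed.

Lemma pow_div_fact_le_exp (x : R) (n : nat) : 0 <= x -> x ^ n / INR (fact n) <= exp x.
Proof.
  intros Hx. eapply Rle_trans; [| apply (exp_ge_taylor x n Hx)].
  assert (Hterm : forall i, 0 <= x ^ i / INR (fact i)).
  { intros i. apply Rdiv_le_0_compat; [now apply pow_le | apply INR_fact_lt_0]. }
  destruct n as [|n]; [apply Rle_refl |].
  rewrite tech5. pose proof (cond_pos_sum _ n Hterm). lra.
Qed.

Lemma is_lim_scal_0 (f : R -> R) (a : R) :
  is_lim f p_infty 0 -> is_lim (fun b => a * f b) p_infty 0.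
Proof.
  intros Hf. replace (Finite 0) with (Rbar_mult a 0) by (simpl; now rewrite Rmult_0_r).
  now apply is_lim_scal_l.
Qed.

Lemma is_lim_pow_mul_exp (m : R) (k : nat) : 0 < m ->
  is_lim (fun b => b ^ k * exp (- m * b)) p_infty 0.
Proof.
  intros Hm.
  set (D := m ^ S k / INR (fact (S k))).
  assert (HD : 0 < D) by (apply Rdiv_lt_0_compat; [now apply pow_lt | apply INR_fact_lt_0]).
  apply (is_lim_le_le_loc (fun _ => 0) (fun b => / D * / b)).
  - exists 0. intros b Hb.
    pose proof (exp_pos (m * b)) as HE. pose proof (pow_lt b k Hb) as Hbk.
    pose proof (Rmult_lt_0_compat b D Hb HD) as HbD.
    assert (Htaylor : b ^ k * (b * D) <= exp (m * b)).
    { replace (b ^ k * (b * D)) with ((m * b) ^ S k / INR (fact (S k)))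
        by (unfold D; rewrite Rpow_mult_distr; simpl pow; field; apply INR_fact_neq_0).
      apply pow_div_fact_le_exp. nra. }
    replace (b ^ k * exp (- m * b)) with (b ^ k * (b * D) * / (exp (m * b) * (b * D)))
      by (replace (- m * b) with (- (m * b)) by ring; rewrite exp_Ropp; field; lra).
    replace (/ D * / b) with (exp (m * b) * / (exp (m * b) * (b * D)))
      by (field; repeat split; lra).
    assert (Hinv : 0 < / (exp (m * b) * (b * D)))
      by (now apply Rinv_0_lt_compat, Rmult_lt_0_compat).
    split.
    + apply Rmult_le_pos; [apply Rmult_le_pos |]; lra.
    + apply Rmult_le_compat_r; [lra | exact Htaylor].
  - apply is_lim_const.
  - apply is_lim_scal_0.
    apply (is_lim_inv (fun b => b) p_infty p_infty); [apply is_lim_id | discriminate].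
Qed.

Lemma is_lim_Rpower_opp (s : R) : 0 < s -> is_lim (fun X => Rpower X (- s)) p_infty 0.
Proof.
  intros Hs. unfold Rpower.
  apply (is_lim_comp exp (fun X => - s * ln X) p_infty 0 m_infty).
  - exact is_lim_exp_m.
  - rewrite <- (is_Rbar_mult_unique (- s) p_infty m_infty).
    + apply is_lim_scal_l, is_lim_ln_p.
    + apply is_Rbar_mult_sym, is_Rbar_mult_p_infty_neg. simpl. lra.
  - exists 0. intros X _. discriminate.
Qed.

Lemma is_lim_Rpower_affine_opp (c s : R) : 0 < c -> 0 < s ->
  is_lim (fun b => Rpower (1 + c * b) (- s)) p_infty 0.
Proof.
  intros Hc Hs.
  apply is_lim_ext with (fun b => Rpower (c * b + 1) (- s)); [intros b; now rewrite Rplus_comm |].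
  apply (is_lim_comp_lin (fun X => Rpower X (- s))); [| lra].
  rewrite (is_Rbar_mult_unique c p_infty p_infty).
  - now apply is_lim_Rpower_opp.
  - apply is_Rbar_mult_sym, is_Rbar_mult_p_infty_pos. exact Hc.
Qed.

Lemma p_basis_bound (c m : R) (k : nat) (b : R) : 0 < c -> 0 < m -> 0 <= b ->
  0 <= p_basis c m k b <= rising c m k / INR (fact k) / c ^ k * Rpower (1 + c * b) (- (m / c)).
Proof.
  intros Hc Hm Hb.
  set (A := rising c m k / INR (fact k)).
  assert (HA : 0 < A) by (apply Rdiv_lt_0_compat; [apply rising_pos; lra | apply INR_fact_lt_0]).
  assert (HX : 0 < 1 + c * b) by nra.
  set (P := Rpower (1 + c * b) (- (m / c))).
  assert (HP : 0 < P) by apply exp_pos.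
  rewrite p_basis_Rpower by lra. fold A.
  rewrite Ropp_plus_distr, Rpower_plus, (Rpower_Ropp _ (INR k)), Rpower_pow by exact HX. fold P.
  pose proof (pow_lt (1 + c * b) k HX). pose proof (pow_lt c k Hc).
  replace (A * b ^ k * (P * / (1 + c * b) ^ k)) with (A * P * (b / (1 + c * b)) ^ k)
    by (unfold Rdiv; rewrite Rpow_mult_distr, pow_inv; field; lra).
  replace (A / c ^ k * P) with (A * P * (/ c) ^ k) by (rewrite pow_inv; field; lra).
  assert (Hratio : 0 <= b / (1 + c * b) <= / c).
  { split; [apply Rdiv_le_0_compat; lra |].
    apply Rmult_le_reg_r with (c * (1 + c * b)); [nra |].
    replace (b / (1 + c * b) * (c * (1 + c * b))) with (c * b) by (field; lra).
    replace (/ c * (c * (1 + c * b))) with (1 + c * b) by (field; lra). lra. }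
  split.
  - apply Rmult_le_pos; [nra | apply pow_le; lra].
  - apply Rmult_le_compat_l; [nra |]. now apply pow_incr.
Qed.

Lemma is_lim_p_basis (c m : R) (k : nat) : 0 <= c -> 0 < m -> is_lim (p_basis c m k) p_infty 0.
Proof.
  intros Hc Hm. destruct (Req_EM_T c 0) as [-> | Hc0].
  - apply is_lim_ext with (fun b => m ^ k / INR (fact k) * (b ^ k * exp (- m * b))).
    { intros b. rewrite p_basis_exp. ring. }
    now apply is_lim_scal_0, is_lim_pow_mul_exp.
  - apply (is_lim_le_le_loc (fun _ => 0)
             (fun b => rising c m k / INR (fact k) / c ^ k * Rpower (1 + c * b) (- (m / c)))).
    + exists 0. intros b Hb. apply p_basis_bound; lra.
    + apply is_lim_const.
    + apply is_lim_scal_0, is_lim_Rpower_affine_opp; [lra | apply Rdiv_lt_0_compat; lra].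
Qed.

Lemma mu_eq_q_basis (c n : R) (j rho : nat) (t : R) :
  0 <= c -> c < n -> (1 <= rho)%nat -> (1 <= j)%nat ->
  mu c n j rho t = q_basis c (n * INR rho + c) (j * rho) t.
Proof.
  intros Hc Hn Hrho Hj.
  assert (Hr : 1 <= INR rho) by (apply (le_INR 1); exact Hrho).
  set (k := (j * rho - 1)%nat).
  assert (HK : (j * rho)%nat = S k) by (unfold k; nia).
  assert (HKR : INR k + 1 = INR j * INR rho) by (rewrite <- S_INR, <- HK; apply mult_INR).
  unfold mu, q_basis. cbv zeta. rewrite HK, Nat.sub_succ, Nat.sub_0_r.
  pose proof (INR_fact_neq_0 k).
  destruct (Req_EM_T c 0) as [-> | Hc0].
  - rewrite p_basis_exp, !Rplus_0_r.
    replace (- (n * INR rho) * t) with (- n * INR rho * t) by ring.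
    simpl pow. field. auto.
  - assert (Hs : 0 < n / c * INR rho) by (apply Rmult_lt_0_compat; [apply Rdiv_lt_0_compat |]; lra).
    rewrite Beta_nat, p_basis_Rpower by lra.
    assert (Hcoef : rising c (n * INR rho + c + c) k
                    = c ^ S k * rising 1 (n / c * INR rho + 1) (S k) / (n * INR rho + c)).
    { replace (n / c * INR rho + 1) with ((n * INR rho + c) / c) by (field; lra).
      rewrite <- rising_scale, rising_S_l by lra. field. nra. }
    assert (Hexponent : - ((n / c + INR j) * INR rho) - 1 = - ((n * INR rho + c + c) / c + INR k)).
    { rewrite Rmult_plus_distr_r, <- HKR. field. lra. }
    pose proof (rising_pos 1 (n / c * INR rho + 1) (S k) ltac:(lra) ltac:(lra)).
    rewrite Hexponent, Hcoef. field. repeat split; nra.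
Qed.

Lemma is_derive_sum_telescope (P D : nat -> R -> R) (K N : nat) (x : R) :
  (forall k, is_derive (P k) x (D k x - D (S k) x)) ->
  is_derive (fun t => sum_f_R0 (fun i => P (i + K)%nat t) N) x (D K x - D (S N + K)%nat x).
Proof.
  intros HP. induction N as [|N IH]; [apply HP |].
  replace (D K x - D (S (S N) + K)%nat x)
    with (plus (D K x - D (S N + K)%nat x) (D (S N + K)%nat x - D (S (S N + K)) x))
    by (unfold plus; simpl; ring).
  apply (is_derive_plus (fun t => sum_f_R0 (fun i => P (i + K)%nat t) N) (P (S N + K)%nat)).
  - exact IH.
  - apply HP.
Qed.

Lemma is_lim_sum_f_R0 (f : nat -> R -> R) (N : nat) :
  (forall i, is_lim (f i) p_infty 0) -> is_lim (fun t => sum_f_R0 (fun i => f i t) N) p_infty 0.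
Proof.
  intros Hf. induction N as [|N IH]; [apply Hf |].
  pose proof (is_lim_plus' _ _ _ _ _ IH (Hf (S N))) as Hsum.
  rewrite Rplus_0_r in Hsum. exact Hsum.
Qed.

Lemma is_RInt_q_basis_telescope (c m : R) (K N : nat) (a b : R) : 0 <= c -> 0 <= a <= b ->
  is_RInt (fun x => q_basis c m K x - q_basis c m (S N + K) x) a b
    (sum_f_R0 (fun i => p_basis c m (i + K) b) N - sum_f_R0 (fun i => p_basis c m (i + K) a) N).
Proof.
  intros Hc Hab.
  apply (is_RInt_derive_le (fun t => sum_f_R0 (fun i => p_basis c m (i + K) t) N));
    [lra | intros x Hx .. | reflexivity].
  - apply is_derive_sum_telescope. intros k. apply is_derive_p_basis. nra.
  - apply (continuous_minus (V := R_NormedModule)); apply continuous_q_basis; nra.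
Qed.

Theorem lemma1 (c n : R) (rho : nat) (hc : 0 <= c) (hn : c < n) (hrho : (1 <= rho)%nat) :
  forall (j : nat) (t : R), 0 <= t ->
    omega_is c n j rho t
      (sum_f_R0 (fun i => p_basis c (n * INR rho + c) (i + j * rho) t) (rho - 1)).
Proof.
  intros j t Ht.
  assert (Hr : 1 <= INR rho) by (apply (le_INR 1); exact hrho).
  set (m := n * INR rho + c).
  assert (Hm : 0 < m) by (unfold m; nra).
  assert (Hrho : (S (rho - 1) = rho)%nat) by lia.
  destruct j as [|j].
  - set (block x := sum_f_R0 (fun i => p_basis c m (i + 0) x) (rho - 1)).
    change (improper_int_infty (mu c n 1 rho) t (block t)).
    apply (improper_int_infty_of_is_RInt _ block).
    + intros b Hb.
      pose proof (is_RInt_opp _ _ _ _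
                    (is_RInt_q_basis_telescope c m 0 (rho - 1) t b hc ltac:(lra))) as Hint.
      replace (block t - block b) with (opp (block b - block t))
        by (unfold opp; simpl; ring).
      eapply is_RInt_ext; [| exact Hint]. intros x _.
      rewrite mu_eq_q_basis, Nat.mul_1_l, Nat.add_0_r, Hrho by (lra || lia).
      fold m. unfold opp; simpl. ring.
    + apply is_lim_sum_f_R0. intros i. apply is_lim_p_basis; lra.
  - simpl omega_is. apply Riemann_RInt_of_is_RInt.
    pose proof (is_RInt_q_basis_telescope c m (S j * rho) (rho - 1) 0 t hc ltac:(lra)) as Hint.
    rewrite (sum_eq_R0 (fun i => p_basis c m (i + S j * rho) 0)), Rminus_0_r in Hint
      by (intros i _; apply p_basis_at_0; nia).
    eapply is_RInt_ext; [| exact Hint]. intros x _.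
    rewrite !mu_eq_q_basis by (lra || lia). rewrite Hrho. reflexivity.
Qed.
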